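(* Let $N\ge3$ and let $\psi$ be a positive (on $(0,\infty)$) $C^2$ function on $[0,\infty)$ with $\psi(0)=\psi''(0)=0$, $\psi'(0)=1$. Let $\tilde\Phi(r):=\left(\frac{r}{\psi(r)}\right)^{\frac{N-1}{2}}r^{\frac{2-N}{2}}$ for $r>0$. If $(N-2)\psi'(r)+(N-1)r\psi''(r)\ge0$ for all $r>0$, then $\tilde\Phi$ is non-increasing on $(0,\infty)$. *)

From Stdlib Require Import Reals.
From Coquelicot Require Import Coquelicot.
Open Scope R_scope.

Definition derive_on_nonneg (f df : R -> R) : Prop :=
  (forall r, 0 < r -> is_derive f r (df r)) /\
  filterlim (fun h => (f h - f 0) / h) (at_right 0) (locally (df 0)).

Definition continuous_on_nonneg (f : R -> R) : Prop :=
  (forall r, 0 < r -> continuous f r) /\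
  filterlim f (at_right 0) (locally (f 0)).

Definition C2_nonneg (psi dpsi d2psi : R -> R) : Prop :=
  derive_on_nonneg psi dpsi /\ derive_on_nonneg dpsi d2psi /\
  continuous_on_nonneg d2psi.

Definition Phi_tilde (N : nat) (psi : R -> R) (r : R) : R :=
  Rpower (r / psi r) ((INR N - 1) / 2) * Rpower r ((2 - INR N) / 2).

(* Write Phi~ = exp L with L r = ((N-1)/2) (ln r - ln psi r) + ((2-N)/2) ln r.
   Then L' r = - g r / (2 r psi r) for g = Phi_tilde_defect, g r = (N-1) r psi' r - psi r;
   g' = (N-2) psi' + (N-1) r psi'' >= 0 is exactly the hypothesis.  Since g is
   nondecreasing on (0,+oo) and tends to -psi 0 = 0 at 0+, it is nonnegative,
   so L, and with it Phi~, is nonincreasing. *)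

From Stdlib Require Import Reals Lra.
From Coquelicot Require Import Coquelicot.
Open Scope R_scope.

Lemma filterlim_Rplus (F : (R -> Prop) -> Prop) {FF : Filter F}
    (f g : R -> R) (a b : R) :
  filterlim f F (locally a) -> filterlim g F (locally b) ->
  filterlim (fun x => f x + g x) F (locally (a + b)).
Proof.
  intros Hf Hg.
  eapply filterlim_comp_2; [exact Hf | exact Hg | exact (@filterlim_plus R_AbsRing _ a b)].
Qed.

Lemma filterlim_Rmult (F : (R -> Prop) -> Prop) {FF : Filter F}
    (f g : R -> R) (a b : R) :
  filterlim f F (locally a) -> filterlim g F (locally b) ->
  filterlim (fun x => f x * g x) F (locally (a * b)).
Proof.
  intros Hf Hg.
  eapply filterlim_comp_2; [exact Hf | exact Hg | exact (@filterlim_mult R_AbsRing a b)].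
Qed.

Lemma filterlim_id_at_right (x : R) : filterlim (fun h => h) (at_right x) (locally x).
Proof.
  eapply filterlim_filter_le_1; [| apply filterlim_id].
  intros P [d Hd]. exists d. intros y Hy _. exact (Hd y Hy).
Qed.

Lemma right_continuous_of_right_derivative (f : R -> R) (x d : R) :
  filterlim (fun h => (f h - f x) / (h - x)) (at_right x) (locally d) ->
  filterlim f (at_right x) (locally (f x)).
Proof.
  intros Hq.
  assert (Hlim : filterlim (fun h => f x + (h + - x) * ((f h - f x) / (h - x)))
                   (at_right x) (locally (f x + (x + - x) * d))).
  { apply (filterlim_Rplus (at_right x)); [apply filterlim_const |].
    apply (filterlim_Rmult (at_right x)); [| exact Hq].
    apply (filterlim_Rplus (at_right x));
      [apply filterlim_id_at_right | apply filterlim_const]. }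
  rewrite Rplus_opp_r, Rmult_0_l, Rplus_0_r in Hlim.
  eapply filterlim_ext_loc; [| exact Hlim].
  exists (mkposreal 1 Rlt_0_1). intros h _ Hh. field. lra.
Qed.

Lemma derive_on_nonneg_right_continuous (f df : R -> R) :
  derive_on_nonneg f df -> filterlim f (at_right 0) (locally (f 0)).
Proof.
  intros [_ Hq]. apply (right_continuous_of_right_derivative f 0 (df 0)).
  eapply filterlim_ext; [| exact Hq]. intros h. simpl. now rewrite Rminus_0_r.
Qed.

Lemma nondecreasing_of_derive_nonneg (f df : R -> R) (a : R) :
  (forall x, a < x -> is_derive f x (df x)) ->
  (forall x, a < x -> 0 <= df x) ->
  forall x y, a < x -> x <= y -> f x <= f y.
Proof.
  intros Hd Hdf x y Hx Hxy.
  destruct (Req_dec x y) as [-> | Hne]; [lra |].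
  destruct (MVT_cor2 f df x y) as [c [Hc Hcxy]]; [lra | |].
  - intros c Hc. apply is_derive_Reals, Hd. lra.
  - assert (0 <= df c * (y - x)) by (apply Rmult_le_pos; [apply Hdf |]; lra).
    lra.
Qed.

Lemma right_limit_le_of_nondecreasing (g : R -> R) (a l : R) :
  (forall x y, a < x -> x <= y -> g x <= g y) ->
  filterlim g (at_right a) (locally l) ->
  forall x, a < x -> l <= g x.
Proof.
  intros Hmono Hl x Hx.
  assert (Hle : at_right a (fun t => g t <= g x)).
  { exists (mkposreal (x - a) ltac:(lra)). intros t Ht Hat. apply Hmono; [exact Hat |].
    apply Rabs_lt_between' in Ht. simpl in Ht. lra. }
  exact (filterlim_le (F := at_right a) g (fun _ => g x) l (g x)
           Hle Hl (filterlim_const (g x))).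
Qed.

Section PhiTilde.

Variables (N : nat) (psi dpsi : R -> R).

Definition ln_Phi_tilde (r : R) : R :=
  (INR N - 1) / 2 * (ln r - ln (psi r)) + (2 - INR N) / 2 * ln r.

Definition Phi_tilde_defect (r : R) : R := (INR N - 1) * (r * dpsi r) - psi r.

Lemma Phi_tilde_exp (r : R) :
  0 < r -> 0 < psi r -> Phi_tilde N psi r = exp (ln_Phi_tilde r).
Proof.
  intros Hr Hpsi. unfold Phi_tilde, ln_Phi_tilde, Rpower.
  rewrite exp_plus, ln_div by assumption. f_equal; f_equal; ring.
Qed.

Lemma is_derive_ln_Phi_tilde (r : R) :
  0 < r -> 0 < psi r -> is_derive psi r (dpsi r) ->
  is_derive ln_Phi_tilde r (- Phi_tilde_defect r / (2 * r * psi r)).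
Proof.
  intros Hr Hpsi Hd. unfold ln_Phi_tilde.
  replace (- Phi_tilde_defect r / (2 * r * psi r)) with
    (plus ((INR N - 1) / 2 * minus (/ r) (scal (dpsi r) (/ psi r)))
          ((2 - INR N) / 2 * / r)).
  - apply (is_derive_plus (fun t => (INR N - 1) / 2 * (ln t - ln (psi t)))
                          (fun t => (2 - INR N) / 2 * ln t)).
    + apply is_derive_scal, (is_derive_minus ln (fun t => ln (psi t))).
      * now apply is_derive_ln.
      * apply (is_derive_comp ln psi); [now apply is_derive_ln | exact Hd].
    + apply is_derive_scal. now apply is_derive_ln.
  - unfold Phi_tilde_defect, plus, minus, scal, opp; simpl.
    unfold mult, plus, opp; simpl. field. lra.
Qed.

Lemma is_derive_Phi_tilde_defect (d2psi : R -> R) (r : R) :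
  is_derive psi r (dpsi r) -> is_derive dpsi r (d2psi r) ->
  is_derive Phi_tilde_defect r ((INR N - 2) * dpsi r + (INR N - 1) * r * d2psi r).
Proof.
  intros Hd Hd2. unfold Phi_tilde_defect.
  replace ((INR N - 2) * dpsi r + (INR N - 1) * r * d2psi r)
    with ((INR N - 1) * (1 * dpsi r + r * d2psi r) - dpsi r) by ring.
  apply (is_derive_minus (fun t => (INR N - 1) * (t * dpsi t)) psi); [| exact Hd].
  apply is_derive_scal, (is_derive_mult (fun t => t) dpsi r 1 (d2psi r));
    [apply (is_derive_id r) | exact Hd2 | intros; apply Rmult_comm].
Qed.

Lemma Phi_tilde_defect_at_right_0 :
  filterlim psi (at_right 0) (locally (psi 0)) ->
  filterlim dpsi (at_right 0) (locally (dpsi 0)) ->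
  filterlim Phi_tilde_defect (at_right 0) (locally (- psi 0)).
Proof.
  intros Hpsi Hdpsi. unfold Phi_tilde_defect.
  replace (- psi 0) with ((INR N - 1) * (0 * dpsi 0) + - psi 0) by ring.
  apply (filterlim_Rplus (at_right 0)).
  - apply (filterlim_Rmult (at_right 0)); [apply filterlim_const |].
    apply (filterlim_Rmult (at_right 0)); [apply filterlim_id_at_right | exact Hdpsi].
  - eapply filterlim_comp; [exact Hpsi | exact (@filterlim_opp R_AbsRing _ (psi 0))].
Qed.

Lemma Phi_tilde_nonincreasing_of_defect_nonneg :
  (forall r, 0 < r -> 0 < psi r) ->
  (forall r, 0 < r -> is_derive psi r (dpsi r)) ->
  (forall r, 0 < r -> 0 <= Phi_tilde_defect r) ->
  forall r s, 0 < r -> r <= s -> Phi_tilde N psi s <= Phi_tilde N psi r.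
Proof.
  intros Hpos Hd Hdefect r s Hr Hrs.
  assert (HL : - ln_Phi_tilde r <= - ln_Phi_tilde s).
  { apply (nondecreasing_of_derive_nonneg (fun t => - ln_Phi_tilde t)
             (fun t => Phi_tilde_defect t / (2 * t * psi t)) 0); [| | exact Hr | exact Hrs].
    - intros t Ht. replace (Phi_tilde_defect t / (2 * t * psi t))
        with (opp (- Phi_tilde_defect t / (2 * t * psi t)))
        by (unfold opp; simpl; unfold Rdiv; ring).
      apply (@is_derive_opp R_AbsRing R_NormedModule ln_Phi_tilde t).
      apply is_derive_ln_Phi_tilde; auto.
    - intros t Ht. assert (Hpt := Hpos t Ht).
      apply Rdiv_le_0_compat; [now apply Hdefect | nra]. }
  assert (Hs : 0 < s) by lra.
  rewrite !Phi_tilde_exp by auto.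
  destruct (Rle_lt_or_eq_dec _ _ HL) as [Hlt | Heq].
  - left. apply exp_increasing. lra.
  - right. f_equal. lra.
Qed.

End PhiTilde.

Theorem lemma4p4 (N : nat) (psi dpsi d2psi : R -> R) :
  (3 <= N)%nat ->
  C2_nonneg psi dpsi d2psi ->
  (forall r, 0 < r -> 0 < psi r) ->
  psi 0 = 0 -> dpsi 0 = 1 -> d2psi 0 = 0 ->
  (forall r, 0 < r -> 0 <= (INR N - 2) * dpsi r + (INR N - 1) * r * d2psi r) ->
  forall r s, 0 < r -> r <= s -> Phi_tilde N psi s <= Phi_tilde N psi r.
Proof.
  intros _ [Hpsi [Hdpsi _]] Hpos Hpsi0 _ _ Hgrowth.
  apply (Phi_tilde_nonincreasing_of_defect_nonneg N psi dpsi Hpos (proj1 Hpsi)).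
  intros r Hr.
  apply (right_limit_le_of_nondecreasing (Phi_tilde_defect N psi dpsi) 0);
    [| | exact Hr].
  - apply (nondecreasing_of_derive_nonneg _
             (fun t => (INR N - 2) * dpsi t + (INR N - 1) * t * d2psi t) 0);
      [| exact Hgrowth].
    intros t Ht. apply is_derive_Phi_tilde_defect;
      [apply (proj1 Hpsi) | apply (proj1 Hdpsi)]; exact Ht.
  - assert (Hlim := Phi_tilde_defect_at_right_0 N psi dpsi
                       (derive_on_nonneg_right_continuous _ _ Hpsi)
                       (derive_on_nonneg_right_continuous _ _ Hdpsi)).
    rewrite Hpsi0, Ropp_0 in Hlim. exact Hlim.
Qed.
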